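(* The function \[ \hat H_\mu(s)=\frac{\tau_\mu^2s+\ell\sqrt{1+\kappa^2s^2}}{\tau_\mu^2s^2+s\ell\sqrt{1+\kappa^2s^2}+1} \] is holomorphic on $\mathbb C_0=\{\mathfrak{Re}\,s>0\}$ and admits only two branching points, at $\pm i\kappa^{-1}$. Moreover all the zeros of the denominator $P(s)=\tau_\mu^2s^2+s\ell\sqrt{1+\kappa^2s^2}+1$ (defined on $\mathbb C$ deprived of the cuts $i(-\infty,-\kappa^{-1}]\cup i[\kappa^{-1},\infty)$, and extended by continuity to the imaginary axis) have strictly negative real part.
   Context: $\ell>0$, $\kappa>0$, $\tau_{\rm buoy}>0$, $h_{\rm eq}$ continuous on $[0,\ell]$ with $0<h_{\rm eq}<1$, $\tau_\mu^2=\tau_{\rm buoy}^2+\frac1\ell\int_0^\ell\frac{x^2}{h_{\rm eq}(x)}dx+\frac{\kappa^2}{h_{\rm eq}(\ell)}$. The square root $\sqrt{z}$ denotes the square root with positive real part. *)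

From Stdlib Require Import Reals ClassicalEpsilon.
From Coquelicot Require Import Coquelicot.
Open Scope R_scope.

(* The square root with positive real part: sqrt z is a w with w*w = z and
   Re w > 0 (unique when it exists, i.e. when z is not in (-oo,0]);
   on (-oo,0] the value is irrelevant/unspecified. *)
Definition csqrt (z : C) : C :=
  epsilon (inhabits (RtoC 0)) (fun w => (w * w = z)%C /\ 0 < Re w).

Definition tau_mu2 (ell kappa tau_buoy : R) (h_eq : R -> R) : R :=
  tau_buoy ^ 2 + / ell * RInt (fun x => x ^ 2 / h_eq x) 0 ell
  + kappa ^ 2 / h_eq ell.

Definition radicand (kappa : R) (s : C) : C :=
  (RtoC 1 + RtoC (kappa ^ 2) * s * s)%C.

Definition Pden (ell kappa t2 : R) (s : C) : C :=
  (RtoC t2 * s * s + s * RtoC ell * csqrt (radicand kappa s) + RtoC 1)%C.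

Definition Hnum (ell kappa t2 : R) (s : C) : C :=
  (RtoC t2 * s + RtoC ell * csqrt (radicand kappa s))%C.

Definition Hhat (ell kappa t2 : R) (s : C) : C :=
  (Hnum ell kappa t2 s / Pden ell kappa t2 s)%C.

Definition on_cuts (kappa : R) (s : C) : Prop :=
  Re s = 0 /\ / kappa <= Rabs (Im s).

Definition sqrt_branch_point (kappa : R) (s0 : C) : Prop :=
  forall r, 0 < r ->
    ~ exists g : C -> C, forall z, 0 < Cmod (z - s0) < r ->
        continuous g z /\ (g z * g z = radicand kappa z)%C.

Definition sqrt_regular_point (kappa : R) (s0 : C) : Prop :=
  exists r, 0 < r /\ exists g : C -> C, forall z, Cmod (z - s0) < r ->
        ex_derive g z /\ (g z * g z = radicand kappa z)%C.

(* Let S(s) be the square root of 1 + kappa^2 s^2 with positive real part.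
   The identity Re (conj s * P(s)) = Re s (tau^2 |s|^2 + 1) + l |s|^2 Re S(s)
   shows that P has no zero with Re s > 0.  At a zero s = i y on the
   imaginary axis the same identity forces Re S = 0, i.e. kappa |y| >= 1;
   there Re P = 1 - tau^2 y^2 - l y Im S < 0, because tau_mu^2 > kappa^2 (as
   h_eq < 1) and the boundary value of S has y Im S >= 0.  On the
   right half-plane S(s) = sqrt(1 + i kappa s) sqrt(1 - i kappa s), the two
   factors lying in the closed upper and lower half-planes respectively; this
   extends S, hence P, continuously to the imaginary axis.  Near any point
   other than +-i/kappa, 1 + kappa^2 s^2 has a holomorphic square root, while
   a continuous root on a small circle around +-i/kappa would have to change
   sign after one turn. *)

From Stdlib Require Import Reals Lra ClassicalEpsilon.
From Coquelicot Require Import Coquelicot.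
Open Scope R_scope.

(** * Complex arithmetic and continuity *)

Lemma Cmod_sqr (w : C) : Cmod w * Cmod w = Re w * Re w + Im w * Im w.
Proof. generalize (Cmod2_alt w); simpl; nra. Qed.

Lemma Cmod_cos_sin (t : R) : Cmod (cos t, sin t) = 1.
Proof.
generalize (Cmod_sqr (cos t, sin t)) (Cmod_ge_0 (cos t, sin t)) (sin2_cos2 t).
unfold Rsqr; simpl; nra.
Qed.

Lemma Re_Cmult_conj (p q : C) : Re (p * Cconj q) = Re p * Re q + Im p * Im q.
Proof. destruct p, q; simpl; ring. Qed.

Lemma Im_Cmult_conj (p q : C) : Im (p * Cconj q) = Im p * Re q - Re p * Im q.
Proof. destruct p, q; simpl; ring. Qed.

Lemma Cmult_integral (a b : C) : (a * b = 0)%C -> a = 0%C \/ b = 0%C.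
Proof.
intros E; destruct (Ceq_dec a 0) as [Ha|Ha]; [left; exact Ha|right].
replace b with (/ a * (a * b))%C by (field; exact Ha); rewrite E; ring.
Qed.

Lemma continuous_Cpair {U : UniformSpace} (a b : U -> R) x :
  continuous a x -> continuous b x -> continuous (fun y => (a y, b y) : C) x.
Proof.
intros Ha Hb P [eps HP].
assert (A := Ha (ball (a x) eps) (locally_ball _ _)).
assert (B := Hb (ball (b x) eps) (locally_ball _ _)).
unfold filtermap in A, B |- *.
generalize (filter_and _ _ A B); apply filter_imp.
intros y [H1 H2]; apply HP; split; assumption.
Qed.

Lemma continuous_Re {U : UniformSpace} (f : U -> C) x :
  continuous f x -> continuous (fun y => Re (f y)) x.
Proof. intros H; apply continuous_comp; [exact H|destruct (f x); apply continuous_fst]. Qed.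

Lemma continuous_Im {U : UniformSpace} (f : U -> C) x :
  continuous f x -> continuous (fun y => Im (f y)) x.
Proof. intros H; apply continuous_comp; [exact H|destruct (f x); apply continuous_snd]. Qed.

Lemma continuous_C_parts {U : UniformSpace} (f : U -> C) x :
  continuous (fun y => Re (f y)) x -> continuous (fun y => Im (f y)) x -> continuous f x.
Proof.
intros H1 H2; apply (continuous_ext (fun y => (Re (f y), Im (f y)) : C)).
- intros y; destruct (f y); reflexivity.
- now apply continuous_Cpair.
Qed.

Lemma continuous_Rplus {U : UniformSpace} (f g : U -> R) x :
  continuous f x -> continuous g x -> continuous (fun y => f y + g y) x.
Proof. exact (@continuous_plus U R_AbsRing R_NormedModule f g x). Qed.

Lemma continuous_Ropp {U : UniformSpace} (f : U -> R) x :
  continuous f x -> continuous (fun y => - f y) x.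
Proof. exact (@continuous_opp U R_AbsRing R_NormedModule f x). Qed.

Lemma continuous_Rminus {U : UniformSpace} (f g : U -> R) x :
  continuous f x -> continuous g x -> continuous (fun y => f y - g y) x.
Proof. exact (@continuous_minus U R_AbsRing R_NormedModule f g x). Qed.

Lemma continuous_Rmult {U : UniformSpace} (f g : U -> R) x :
  continuous f x -> continuous g x -> continuous (fun y => f y * g y) x.
Proof. exact (@continuous_mult U R_AbsRing f g x). Qed.

Lemma continuous_Rinv_comp {U : UniformSpace} (f : U -> R) x :
  continuous f x -> f x <> 0 -> continuous (fun y => / f y) x.
Proof. intros H Hx; apply continuous_comp; [exact H|now apply continuous_Rinv]. Qed.

Lemma continuous_sqrt_comp {U : UniformSpace} (f : U -> R) x :
  continuous f x -> continuous (fun y => sqrt (f y)) x.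
Proof. intros H; apply continuous_comp; [exact H|apply continuous_sqrt]. Qed.

Lemma continuous_cos_comp {U : UniformSpace} (f : U -> R) x :
  continuous f x -> continuous (fun y => cos (f y)) x.
Proof. intros H; apply continuous_comp; [exact H|apply continuous_cos]. Qed.

Lemma continuous_sin_comp {U : UniformSpace} (f : U -> R) x :
  continuous f x -> continuous (fun y => sin (f y)) x.
Proof. intros H; apply continuous_comp; [exact H|apply continuous_sin]. Qed.

Create HintDb cont.
#[export] Hint Resolve continuous_const continuous_id continuous_Cpair
  continuous_Re continuous_Im
  continuous_Rplus continuous_Rminus continuous_Ropp continuous_Rmult continuous_sqrt_comp
  continuous_cos_comp continuous_sin_comp : cont.

Lemma continuous_Cplus {U : UniformSpace} (f g : U -> C) x :
  continuous f x -> continuous g x -> continuous (fun y => (f y + g y)%C) x.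
Proof. intros; apply continuous_C_parts; simpl; auto with cont. Qed.

Lemma continuous_Copp {U : UniformSpace} (f : U -> C) x :
  continuous f x -> continuous (fun y => (- f y)%C) x.
Proof. intros; apply continuous_C_parts; simpl; auto with cont. Qed.

Lemma continuous_Cminus {U : UniformSpace} (f g : U -> C) x :
  continuous f x -> continuous g x -> continuous (fun y => (f y - g y)%C) x.
Proof. intros; apply continuous_C_parts; simpl; auto with cont. Qed.

Lemma continuous_Cmult {U : UniformSpace} (f g : U -> C) x :
  continuous f x -> continuous g x -> continuous (fun y => (f y * g y)%C) x.
Proof. intros; apply continuous_C_parts; simpl; auto 6 with cont. Qed.

Lemma continuous_Cconj {U : UniformSpace} (f : U -> C) x :
  continuous f x -> continuous (fun y => Cconj (f y)) x.
Proof. intros; apply continuous_C_parts; simpl; auto with cont. Qed.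

Lemma continuous_Cmod {U : UniformSpace} (f : U -> C) x :
  continuous f x -> continuous (fun y => Cmod (f y)) x.
Proof. intros; unfold Cmod; simpl; auto 7 with cont. Qed.

#[export] Hint Resolve continuous_Cplus continuous_Cminus continuous_Copp
  continuous_Cmult continuous_Cconj continuous_Cmod : cont.

Lemma continuous_Cinv {U : UniformSpace} (f : U -> C) x :
  continuous f x -> f x <> 0%C -> continuous (fun y => (/ f y)%C) x.
Proof.
intros Hf Hx.
assert (Hn : Re (f x) * Re (f x) + Im (f x) * Im (f x) <> 0).
{ intros E; apply Hx; destruct (f x) as [a b]; simpl in E.
  assert (a = 0) by nra; assert (b = 0) by nra; subst; reflexivity. }
assert (Hi : continuous (fun y => / (Re (f y) ^ 2 + Im (f y) ^ 2)) x).
{ apply continuous_Rinv_comp; simpl; auto 7 with cont; lra. }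
apply continuous_C_parts; simpl; unfold Rdiv; auto with cont.
Qed.

Lemma locally_Cmod (z : C) (P : C -> Prop) (e : R) :
  0 < e -> (forall y, Cmod (y - z) < e -> P y) -> locally z P.
Proof.
intros He H.
change (@locally (NormedModule.UniformSpace C_AbsRing C_NormedModule) z P).
generalize (@locally_ball_norm C_AbsRing C_NormedModule z (mkposreal e He)).
apply filter_imp; intros y Hy; apply H; exact Hy.
Qed.

Lemma locally_Cmod_inv (z : C) (P : C -> Prop) :
  locally z P -> exists e, 0 < e /\ forall y, Cmod (y - z) < e -> P y.
Proof.
intros H.
change (@locally (NormedModule.UniformSpace C_AbsRing C_NormedModule) z P) in H.
destruct (locally_norm_le_locally z P H) as [e He].
exists e; split; [apply cond_pos|intros y Hy; apply He; exact Hy].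
Qed.

Lemma locally_C_abs (z : C) (P : C -> Prop) :
  @locally C_UniformSpace z P -> @locally (AbsRing_UniformSpace C_AbsRing) z P.
Proof.
intros H; destruct (locally_Cmod_inv z P H) as [e [He H']].
exists (mkposreal e He); intros y Hy; apply H'; exact Hy.
Qed.

Lemma locally_pos {U : UniformSpace} (f : U -> R) x :
  continuous f x -> 0 < f x -> locally x (fun y => 0 < f y).
Proof. intros Hf Hx; apply Hf, (open_gt 0 (f x) Hx). Qed.

Lemma locally_Cneq0 {U : UniformSpace} (f : U -> C) x :
  continuous f x -> f x <> 0%C -> locally x (fun y => f y <> 0%C).
Proof.
intros Hf Hx.
generalize (locally_pos _ x (continuous_Cmod f x Hf) (proj1 (Cmod_gt_0 _) Hx)).
apply filter_imp; intros y Hy; apply Cmod_gt_0, Hy.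
Qed.

(** * Square roots *)

(** [w] lies off the cut [(-oo, 0]]. *)
Definition slit_plane (w : C) : Prop := 0 < Cmod w + Re w.

Lemma slit_plane_intro (w : C) : Im w <> 0 \/ 0 < Re w -> slit_plane w.
Proof.
unfold slit_plane; intros H; generalize (Cmod_sqr w) (Cmod_ge_0 w).
destruct w as [x y]; simpl in *; destruct H as [H|H]; [|nra].
assert (0 < y * y) by (apply Rsqr_pos_lt; exact H); nra.
Qed.

Lemma Cmod_pm_Re_ge0 (w : C) : 0 <= Cmod w + Re w /\ 0 <= Cmod w - Re w.
Proof. generalize (re_le_Cmod w); unfold Rabs; destruct Rcase_abs; lra. Qed.

Lemma Csqr_inj_Re_pos (v w : C) : (v * v = w * w)%C -> 0 < Re v -> 0 < Re w -> v = w.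
Proof.
intros E Hv Hw.
assert (Hs : (v + w)%C <> 0%C).
{ intros F; apply (f_equal Re) in F; destruct v, w; simpl in *; lra. }
apply Ceq_minus.
replace (v - w)%C with ((v * v - w * w) / (v + w))%C by (field; exact Hs).
rewrite E; field; exact Hs.
Qed.

Lemma csqrt_eq (z w : C) : (w * w = z)%C -> 0 < Re w -> csqrt z = w.
Proof.
intros E H; unfold csqrt.
destruct (epsilon_spec (inhabits (RtoC 0)) (fun w => (w * w = z)%C /\ 0 < Re w)
  (ex_intro _ w (conj E H))) as [E' H'].
apply Csqr_inj_Re_pos; [rewrite E, E'; reflexivity|exact H'|exact H].
Qed.

(** A square root of [w] when [Im w >= 0] (see [sqrt_up_sqr]); unlike [csqrt]
    it is continuous on all of [C]. *)
Definition sqrt_up (w : C) : C :=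
  (sqrt ((Cmod w + Re w) / 2), sqrt ((Cmod w - Re w) / 2)).

Lemma sqrt_up_sqr (w : C) : (sqrt_up w * sqrt_up w)%C = (Re w, Rabs (Im w)).
Proof.
destruct (Cmod_pm_Re_ge0 w) as [Hp Hm]; unfold sqrt_up, Cmult; simpl.
assert (Huv : sqrt ((Cmod w + Re w) / 2) * sqrt ((Cmod w - Re w) / 2) = Rabs (Im w) / 2).
{ rewrite <- sqrt_mult_alt by lra.
  replace ((Cmod w + Re w) / 2 * ((Cmod w - Re w) / 2)) with (Rsqr (Im w / 2))
    by (unfold Rsqr; generalize (Cmod_sqr w); destruct w; simpl; nra).
  rewrite sqrt_Rsqr_abs, Rabs_div, (Rabs_right 2) by lra; reflexivity. }
rewrite !sqrt_sqrt by lra; f_equal; lra.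
Qed.

Lemma Re_sqrt_up_pos (w : C) : slit_plane w -> 0 < Re (sqrt_up w).
Proof. intros H; apply sqrt_lt_R0; unfold slit_plane in H; lra. Qed.

Lemma Im_sqrt_up_ge0 (w : C) : 0 <= Im (sqrt_up w).
Proof. apply sqrt_pos. Qed.

Lemma Re_sqrt_up_ge0 (w : C) : 0 <= Re (sqrt_up w).
Proof. apply sqrt_pos. Qed.

Lemma Im_sqrt_up_nonneg_real (w : C) : Im w = 0 -> 0 <= Re w -> Im (sqrt_up w) = 0.
Proof.
intros Hi Hr; generalize (Cmod_sqr w) (Cmod_ge_0 w); rewrite Hi; intros M M0.
assert (E : Cmod w = Re w) by nra.
unfold sqrt_up; simpl; rewrite E; replace ((Re w - Re w) / 2) with 0 by field.
apply sqrt_0.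
Qed.

Lemma continuous_sqrt_up (w : C) : continuous sqrt_up w.
Proof. unfold sqrt_up, Rdiv; auto 7 with cont. Qed.

Lemma sqrt_up_root (w : C) : 0 <= Im w -> (sqrt_up w * sqrt_up w)%C = w.
Proof. intros H; rewrite sqrt_up_sqr, Rabs_pos_eq by exact H; destruct w; reflexivity. Qed.

Lemma Cconj_sqrt_up_root (w : C) : Im w <= 0 -> (Cconj (sqrt_up w) * Cconj (sqrt_up w))%C = w.
Proof.
intros H; rewrite <- Cmult_conj, sqrt_up_sqr, Rabs_left1 by exact H.
destruct w; unfold Cconj; simpl; f_equal; ring.
Qed.

Lemma Csqr_surj (z : C) : exists c : C, (c * c)%C = z.
Proof.
destruct (Rle_or_lt 0 (Im z)) as [H|H].
- exists (sqrt_up z); apply sqrt_up_root, H.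
- exists (Cconj (sqrt_up z)); apply Cconj_sqrt_up_root; lra.
Qed.

Definition csqrt_formula (w : C) : C :=
  (sqrt ((Cmod w + Re w) / 2), Im w / (2 * sqrt ((Cmod w + Re w) / 2))).

Lemma csqrt_formula_spec (w : C) : slit_plane w ->
  (csqrt_formula w * csqrt_formula w)%C = w /\ 0 < Re (csqrt_formula w).
Proof.
unfold slit_plane, csqrt_formula; intros H.
set (u := sqrt ((Cmod w + Re w) / 2)).
assert (Hu : 0 < u) by (apply sqrt_lt_R0; lra).
assert (Hu2 : u * u = (Cmod w + Re w) / 2) by (apply sqrt_sqrt; lra).
split; [|exact Hu].
generalize (Cmod_sqr w); destruct w as [x y]; unfold Cmult; simpl in *; intros M.
f_equal; [|field; lra].
apply (Rmult_eq_reg_l (4 * (u * u))); [|nra].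
field_simplify; [|lra].
replace (u ^ 4) with ((u * u) * (u * u)) by ring; replace (u ^ 2) with (u * u) by ring.
rewrite Hu2; nra.
Qed.

Lemma csqrt_spec (z : C) : slit_plane z -> (csqrt z * csqrt z)%C = z /\ 0 < Re (csqrt z).
Proof.
intros H; destruct (csqrt_formula_spec z H) as [E P].
rewrite (csqrt_eq z _ E P); split; assumption.
Qed.

Lemma continuous_csqrt (z : C) : slit_plane z -> continuous csqrt z.
Proof.
unfold slit_plane; intros H.
apply continuous_ext_loc with csqrt_formula.
- generalize (locally_pos (fun w => Cmod w + Re w) z ltac:(auto with cont) H).
  apply filter_imp; intros w Hw.
  destruct (csqrt_formula_spec w Hw) as [E P]; symmetry; exact (csqrt_eq w _ E P).
- assert (0 < sqrt ((Cmod z + Re z) / 2)) by (apply sqrt_lt_R0; lra).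
  unfold csqrt_formula, Rdiv.
  apply continuous_Cpair; auto 6 with cont.
  apply continuous_Rmult; auto with cont.
  apply continuous_Rinv_comp; auto 6 with cont; lra.
Qed.

(** * Complex differentiability *)

(** Carathéodory's characterisation of complex differentiability: the
    difference quotient extends continuously to [z]. *)
Definition cdiff (f : C -> C) (z : C) : Prop :=
  exists D : C -> C, continuous D z /\
    locally z (fun y => (f y - f z = (y - z) * D y)%C).

Lemma cdiff_ex_derive (f : C -> C) (z : C) : cdiff f z -> ex_derive f z.
Proof.
intros [D [HD Hf]]; exists (D z); split; [apply is_linear_scal_l|].
intros x Hx.
apply (@is_filter_lim_locally_unique C_AbsRing (AbsRing_NormedModule C_AbsRing)) in Hx.
subst x.
intros eps.
assert (HDz := HD (fun w => Cmod (w - D z) < eps)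
  (locally_Cmod _ _ _ (cond_pos eps) (fun y h => h))).
generalize (filter_and _ _ (locally_C_abs _ _ HDz) (locally_C_abs _ _ Hf)).
apply filter_imp; intros y [H1 H2].
change (Cmod ((f y - f z) - (y - z) * D z)%C <= eps * Cmod (y - z)%C).
rewrite H2.
replace ((y - z) * D y - (y - z) * D z)%C with ((y - z) * (D y - D z))%C by ring.
rewrite Cmod_mult; generalize (Cmod_ge_0 (y - z)%C); simpl in H1; nra.
Qed.

Lemma cdiff_continuous (f : C -> C) (z : C) : cdiff f z -> continuous f z.
Proof.
intros [D [HD Hf]].
apply continuous_ext_loc with (fun y => (f z + (y - z) * D y)%C).
- revert Hf; apply filter_imp; intros y H; simpl; rewrite <- H.
  change (f z + (f y - f z) = f y)%C; ring.
- auto with cont.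
Qed.

Lemma cdiff_const (c z : C) : cdiff (fun _ => c) z.
Proof. exists (fun _ => 0%C); split; [auto with cont|apply filter_forall; intros; ring]. Qed.

Lemma cdiff_id (z : C) : cdiff (fun y => y) z.
Proof. exists (fun _ => 1%C); split; [auto with cont|apply filter_forall; intros; ring]. Qed.

Lemma cdiff_plus (f g : C -> C) (z : C) :
  cdiff f z -> cdiff g z -> cdiff (fun y => (f y + g y)%C) z.
Proof.
intros [D1 [H1 L1]] [D2 [H2 L2]]; exists (fun y => (D1 y + D2 y)%C); split; [auto with cont|].
generalize (filter_and _ _ L1 L2); apply filter_imp; intros y [A B].
replace (f y + g y - (f z + g z))%C with ((f y - f z) + (g y - g z))%C by ring.
rewrite A, B; ring.
Qed.

Lemma cdiff_mult (f g : C -> C) (z : C) :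
  cdiff f z -> cdiff g z -> cdiff (fun y => (f y * g y)%C) z.
Proof.
intros Hf Hg; generalize (cdiff_continuous g z Hg); intros Cg.
destruct Hf as [D1 [H1 L1]], Hg as [D2 [H2 L2]].
exists (fun y => (D1 y * g y + f z * D2 y)%C); split; [auto with cont|].
generalize (filter_and _ _ L1 L2); apply filter_imp; intros y [A B].
replace (f y * g y - f z * g z)%C with ((f y - f z) * g y + f z * (g y - g z))%C by ring.
rewrite A, B; ring.
Qed.

Create HintDb cdiff.
#[export] Hint Resolve cdiff_const cdiff_id cdiff_plus cdiff_mult : cdiff.

Lemma cdiff_inv (f : C -> C) (z : C) :
  cdiff f z -> f z <> 0%C -> cdiff (fun y => (/ f y)%C) z.
Proof.
intros Hf Hz; generalize (cdiff_continuous f z Hf); intros Cf.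
generalize (locally_Cneq0 f z Cf Hz); intros Nz.
destruct Hf as [D [HD L]].
exists (fun y => (- D y * / (f y * f z))%C); split.
- apply continuous_Cmult; [auto with cont|].
  apply continuous_Cinv; [auto with cont|now apply Cmult_neq_0].
- generalize (filter_and _ _ L Nz); apply filter_imp; intros y [A B].
  replace ((y - z) * (- D y * / (f y * f z)))%C
    with (- ((y - z) * D y) * / (f y * f z))%C by ring.
  rewrite <- A; field; split; assumption.
Qed.

(** A continuous square root of a differentiable function is differentiable
    where it does not vanish: [S y - S z = (Q y - Q z) / (S y + S z)]. *)
Lemma cdiff_root (S Q : C -> C) (z : C) :
  continuous S z -> S z <> 0%C -> locally z (fun y => (S y * S y = Q y)%C) ->
  cdiff Q z -> cdiff S z.
Proof.
intros HS Hz Hsq [D [HD L]].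
assert (H2 : (S z + S z)%C <> 0%C).
{ replace (S z + S z)%C with (2 * S z)%C by ring.
  apply Cmult_neq_0; [intros E; injection E; lra|exact Hz]. }
assert (Nz := locally_Cneq0 (fun y => (S y + S z)%C) z ltac:(auto with cont) H2).
assert (Ez := locally_singleton _ _ Hsq); simpl in Ez.
exists (fun y => (D y * / (S y + S z))%C); split.
- apply continuous_Cmult; [exact HD|apply continuous_Cinv; auto with cont].
- generalize (filter_and _ _ (filter_and _ _ L Nz) Hsq); apply filter_imp.
  intros y [[A B] E].
  replace ((y - z) * (D y * / (S y + S z)))%C with (((y - z) * D y) * / (S y + S z))%C by ring.
  rewrite <- A, <- E, <- Ez; field; exact B.
Qed.

Lemma cdiff_csqrt_comp (h : C -> C) (z : C) :
  cdiff h z -> slit_plane (h z) -> cdiff (fun y => csqrt (h y)) z.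
Proof.
intros Hh Hz; generalize (cdiff_continuous h z Hh); intros Ch.
apply cdiff_root with h; [| |apply filter_imp with (fun y => slit_plane (h y))|exact Hh].
- apply continuous_comp; [exact Ch|now apply continuous_csqrt].
- intros E; generalize (proj2 (csqrt_spec _ Hz)); rewrite E; simpl; lra.
- intros y Hy; apply csqrt_spec, Hy.
- apply locally_pos; [auto with cont|exact Hz].
Qed.

(** * The radicand and the denominator *)

Lemma Re_radicand (kappa : R) (s : C) :
  Re (radicand kappa s) = 1 + kappa ^ 2 * (Re s * Re s - Im s * Im s).
Proof. destruct s; unfold radicand; simpl; ring. Qed.

Lemma Im_radicand (kappa : R) (s : C) :
  Im (radicand kappa s) = 2 * kappa ^ 2 * Re s * Im s.
Proof. destruct s; unfold radicand; simpl; ring. Qed.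

Lemma cdiff_radicand (kappa : R) (z : C) : cdiff (radicand kappa) z.
Proof.
exists (fun y => (RtoC (kappa ^ 2) * (y + z))%C); split; [auto with cont|].
apply filter_forall; intros y; unfold radicand; ring.
Qed.

Lemma radicand_slit_plane (kappa : R) (s : C) :
  0 < kappa -> 0 < Re s -> slit_plane (radicand kappa s).
Proof.
intros Hk Hs; apply slit_plane_intro; rewrite Re_radicand, Im_radicand.
assert (0 < kappa ^ 2) by (apply pow_lt, Hk).
destruct (Req_dec (Im s) 0) as [E|E]; [right; rewrite E; nra|left].
intros F; apply Rmult_integral in F; destruct F as [F|F]; [|exact (E F)].
assert (0 < 2 * kappa ^ 2 * Re s) by (apply Rmult_lt_0_compat; lra); lra.
Qed.

Lemma radicand_eq0 (kappa : R) (s : C) :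
  0 < kappa -> radicand kappa s = 0%C -> s = (0, / kappa) \/ s = (0, - / kappa).
Proof.
intros Hk E.
generalize (f_equal Re E) (f_equal Im E); rewrite Re_radicand, Im_radicand.
destruct s as [x y]; simpl; intros E1 E2.
assert (Hk2 : 0 < kappa ^ 2) by (apply pow_lt, Hk).
assert (Hx : x = 0).
{ destruct (Req_dec x 0) as [|Hx]; [assumption|].
  assert (y = 0) by (apply (Rmult_eq_reg_l (2 * kappa ^ 2 * x)); [lra|]; nra).
  subst y; nra. }
subst x.
assert (K : (kappa * y - 1) * (kappa * y + 1) = 0) by (simpl in E1; nra).
apply Rmult_integral in K; destruct K as [K|K]; [left|right]; f_equal;
  apply (Rmult_eq_reg_l kappa); try lra; field_simplify; lra.
Qed.

Definition Ppoly (ell t2 : R) (s S : C) : C :=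
  (RtoC t2 * s * s + s * RtoC ell * S + RtoC 1)%C.

Lemma Re_Cconj_Ppoly (ell t2 : R) (s S : C) :
  Re (Cconj s * Ppoly ell t2 s S) =
  Re s * (t2 * (Re s * Re s + Im s * Im s) + 1) + ell * (Re s * Re s + Im s * Im s) * Re S.
Proof. destruct s, S; unfold Ppoly; simpl; ring. Qed.

Lemma Ppoly_neq0_rhp (ell t2 : R) (s S : C) :
  0 < ell -> 0 <= t2 -> 0 < Re s -> 0 <= Re S -> Ppoly ell t2 s S <> 0%C.
Proof.
intros Hl Ht Hs HS E.
generalize (Re_Cconj_Ppoly ell t2 s S); rewrite E, Cmult_0_r.
change (Re 0%C) with 0.
assert (0 <= Re s * Re s + Im s * Im s) by nra.
assert (0 <= ell * (Re s * Re s + Im s * Im s) * Re S)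
  by (apply Rmult_le_pos; [apply Rmult_le_pos|]; lra).
assert (0 <= t2 * (Re s * Re s + Im s * Im s)) by (apply Rmult_le_pos; lra).
nra.
Qed.

Lemma Ppoly_neq0_axis (ell kappa t2 y : R) (S : C) :
  0 < ell -> kappa ^ 2 < t2 -> (S * S)%C = radicand kappa (0, y) ->
  0 <= y * Im S -> Ppoly ell t2 (0, y) S <> 0%C.
Proof.
intros Hl Ht HS Hy E.
generalize (f_equal Re HS) (f_equal Im HS) (f_equal Re E) (f_equal Im E).
rewrite Re_radicand, Im_radicand; destruct S as [p q]; unfold Ppoly; simpl in *.
intros E1 E2 E3 E4.
destruct (Req_dec y 0) as [Y|Y]; [subst y; lra|].
assert (Hp : p = 0).
{ apply (Rmult_eq_reg_l (y * ell)); [lra|].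
  apply Rmult_integral_contrapositive_currified; lra. }
subst p.
assert (1 <= kappa ^ 2 * (y * y)) by nra.
assert (0 < y * y) by (apply Rsqr_pos_lt, Y).
assert (0 <= ell * (y * q)) by (apply Rmult_le_pos; lra).
nra.
Qed.

(** For [Re z >= 0], [1 + i kappa z] lies in the closed upper and
    [1 - i kappa z] in the closed lower half-plane, so this is a square root
    of [1 + kappa^2 z^2] there; being continuous on all of [C], it provides the
    boundary values of [csqrt (radicand kappa z)] on the imaginary axis. *)
Definition root_rhp (kappa : R) (z : C) : C :=
  (sqrt_up (1 + Ci * kappa * z) * Cconj (sqrt_up (1 - Ci * kappa * z)))%C.

Lemma continuous_root_rhp (kappa : R) (z : C) : continuous (root_rhp kappa) z.
Proof.
unfold root_rhp; apply continuous_Cmult; [|apply continuous_Cconj];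
  (apply continuous_comp; [auto with cont|apply continuous_sqrt_up]).
Qed.

Lemma root_rhp_sqr (kappa : R) (z : C) : 0 <= kappa -> 0 <= Re z ->
  (root_rhp kappa z * root_rhp kappa z)%C = radicand kappa z.
Proof.
intros Hk Hz; unfold root_rhp.
set (a := (1 + Ci * kappa * z)%C); set (b := (1 - Ci * kappa * z)%C).
replace (sqrt_up a * Cconj (sqrt_up b) * (sqrt_up a * Cconj (sqrt_up b)))%C
  with ((sqrt_up a * sqrt_up a) * (Cconj (sqrt_up b) * Cconj (sqrt_up b)))%C by ring.
rewrite sqrt_up_root, Cconj_sqrt_up_root.
- unfold a, b, radicand; destruct z; unfold Ci, RtoC, Cmult, Cplus, Cminus, Copp; simpl.
  apply injective_projections; simpl; ring.
- unfold b; destruct z; simpl in *; nra.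
- unfold a; destruct z; simpl in *; nra.
Qed.

Lemma Re_root_rhp_pos (kappa : R) (z : C) : 0 < kappa -> 0 < Re z -> 0 < Re (root_rhp kappa z).
Proof.
intros Hk Hz; unfold root_rhp; rewrite Re_Cmult_conj.
set (a := (1 + Ci * kappa * z)%C); set (b := (1 - Ci * kappa * z)%C).
assert (Ha : slit_plane a)
  by (apply slit_plane_intro; left; unfold a; destruct z; simpl in *; nra).
assert (Hb : slit_plane b)
  by (apply slit_plane_intro; left; unfold b; destruct z; simpl in *; nra).
generalize (Re_sqrt_up_pos a Ha) (Re_sqrt_up_pos b Hb) (Im_sqrt_up_ge0 a) (Im_sqrt_up_ge0 b).
nra.
Qed.

Lemma Im_root_rhp_axis (kappa y : R) : 0 < kappa -> 0 <= y * Im (root_rhp kappa (0, y)).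
Proof.
intros Hk; unfold root_rhp; rewrite Im_Cmult_conj.
set (a := (1 + Ci * kappa * (0, y))%C); set (b := (1 - Ci * kappa * (0, y))%C).
assert (Ea : a = RtoC (1 - kappa * y))
  by (unfold a, Ci, RtoC, Cmult, Cplus; simpl; f_equal; ring).
assert (Eb : b = RtoC (1 + kappa * y))
  by (unfold b, Ci, RtoC, Cmult, Cminus, Cplus, Copp; simpl; f_equal; ring).
generalize (Re_sqrt_up_ge0 a) (Re_sqrt_up_ge0 b) (Im_sqrt_up_ge0 a) (Im_sqrt_up_ge0 b).
intros; destruct (Rle_or_lt 0 y) as [Hy|Hy].
- assert (E : Im (sqrt_up b) = 0) by (apply Im_sqrt_up_nonneg_real; rewrite Eb; simpl; nra).
  rewrite E, Rmult_0_r, Rminus_0_r.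
  apply Rmult_le_pos; [exact Hy|now apply Rmult_le_pos].
- assert (E : Im (sqrt_up a) = 0) by (apply Im_sqrt_up_nonneg_real; rewrite Ea; simpl; nra).
  rewrite E, Rmult_0_l, Rminus_0_l.
  replace (y * - (Re (sqrt_up a) * Im (sqrt_up b)))
    with ((- y) * (Re (sqrt_up a) * Im (sqrt_up b))) by ring.
  apply Rmult_le_pos; [lra|now apply Rmult_le_pos].
Qed.

Lemma csqrt_radicand_rhp (kappa : R) (z : C) : 0 < kappa -> 0 < Re z ->
  csqrt (radicand kappa z) = root_rhp kappa z.
Proof.
intros Hk Hz; apply csqrt_eq; [apply root_rhp_sqr; lra|now apply Re_root_rhp_pos].
Qed.

(** * Zeros and boundary values of the denominator *)

Lemma Pden_Ppoly (ell kappa t2 : R) (s : C) :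
  Pden ell kappa t2 s = Ppoly ell t2 s (csqrt (radicand kappa s)).
Proof. reflexivity. Qed.

Lemma Pden_neq0_rhp (ell kappa t2 : R) (s : C) :
  0 < ell -> 0 < kappa -> 0 <= t2 -> 0 < Re s -> Pden ell kappa t2 s <> 0%C.
Proof.
intros Hl Hk Ht Hs; rewrite Pden_Ppoly; apply Ppoly_neq0_rhp; try assumption.
apply Rlt_le, csqrt_spec, radicand_slit_plane; assumption.
Qed.

Lemma Hhat_ex_derive (ell kappa t2 : R) (s : C) :
  0 < ell -> 0 < kappa -> 0 <= t2 -> 0 < Re s -> ex_derive (Hhat ell kappa t2) s.
Proof.
intros Hl Hk Ht Hs; apply cdiff_ex_derive; unfold Hhat, Cdiv.
assert (HS : cdiff (fun y => csqrt (radicand kappa y)) s)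
  by (apply cdiff_csqrt_comp; [apply cdiff_radicand|now apply radicand_slit_plane]).
apply cdiff_mult; [unfold Hnum; auto with cdiff|].
apply cdiff_inv; [unfold Pden; auto 6 with cdiff|now apply Pden_neq0_rhp].
Qed.

Lemma radicand_axis (kappa y : R) : radicand kappa (0, y) = RtoC (1 - kappa ^ 2 * (y * y)).
Proof. unfold radicand, RtoC, Cmult, Cplus; simpl; f_equal; ring. Qed.

Lemma csqrt_pos_real (r : R) : 0 < r -> csqrt (RtoC r) = RtoC (sqrt r).
Proof.
intros Hr; apply csqrt_eq; [|simpl; apply sqrt_lt_R0, Hr].
rewrite <- RtoC_mult, sqrt_sqrt by lra; reflexivity.
Qed.

Lemma off_cuts_axis (kappa y : R) : 0 < kappa -> ~ on_cuts kappa (0, y) ->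
  kappa ^ 2 * (y * y) < 1.
Proof.
intros Hk Hc.
assert (Hy : Rabs y < / kappa)
  by (apply Rnot_le_lt; intros H; apply Hc; split; [reflexivity|exact H]).
assert (kappa * Rabs y < 1)
  by (apply (Rmult_lt_compat_l kappa) in Hy; [rewrite Rinv_r in Hy|]; lra).
replace (kappa ^ 2 * (y * y)) with ((kappa * Rabs y) * (kappa * Rabs y))
  by (unfold Rabs; destruct Rcase_abs; ring).
assert (0 <= kappa * Rabs y) by (apply Rmult_le_pos; [lra|apply Rabs_pos]).
nra.
Qed.

Lemma Pden_eq0_Re_neg (ell kappa t2 : R) (s : C) :
  0 < ell -> 0 < kappa -> kappa ^ 2 < t2 ->
  ~ on_cuts kappa s -> Pden ell kappa t2 s = 0%C -> Re s < 0.
Proof.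
intros Hl Hk Ht Hc E.
assert (0 < kappa ^ 2) by (apply pow_lt, Hk).
destruct (Rtotal_order (Re s) 0) as [Hs|[Hs|Hs]]; [exact Hs| |].
- exfalso; destruct s as [x y]; simpl in Hs; subst x.
  assert (Hr : 0 < 1 - kappa ^ 2 * (y * y)) by (generalize (off_cuts_axis kappa y Hk Hc); lra).
  revert E; rewrite Pden_Ppoly, radicand_axis, csqrt_pos_real by exact Hr.
  apply Ppoly_neq0_axis with kappa; [exact Hl|exact Ht| |simpl; lra].
  rewrite radicand_axis, <- RtoC_mult, sqrt_sqrt by lra; reflexivity.
- exfalso; exact (Pden_neq0_rhp ell kappa t2 s Hl Hk ltac:(lra) Hs E).
Qed.

Lemma filterlim_within_ext (F G : C -> C) (D : C -> Prop) (p : C) :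
  continuous F p -> (forall z, D z -> G z = F z) ->
  filterlim G (within D (locally p)) (locally (F p)).
Proof.
intros HF E; apply filterlim_ext_loc with F.
- unfold within; apply filter_forall; intros z Hz; symmetry; apply E, Hz.
- eapply filterlim_filter_le_1; [apply filter_le_within|exact HF].
Qed.

Lemma Pden_axis_limit (ell kappa t2 y : R) :
  0 < ell -> 0 < kappa -> kappa ^ 2 < t2 ->
  exists L : C, L <> 0%C /\
    filterlim (Pden ell kappa t2) (within (fun z : C => 0 < Re z) (locally ((0, y) : C)))
      (locally L).
Proof.
intros Hl Hk Ht; exists (Ppoly ell t2 (0, y) (root_rhp kappa (0, y))); split.
- apply Ppoly_neq0_axis with kappa; [exact Hl|exact Ht| |now apply Im_root_rhp_axis].
  apply root_rhp_sqr; simpl; lra.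
- apply (filterlim_within_ext (fun z => Ppoly ell t2 z (root_rhp kappa z))).
  + generalize (continuous_root_rhp kappa (0, y)); unfold Ppoly; auto 6 with cont.
  + intros z Hz; rewrite Pden_Ppoly, csqrt_radicand_rhp by assumption; reflexivity.
Qed.

(** * The constant tau_mu^2 *)

Definition clamp (a b x : R) : R := (a + b + Rabs (x - a) - Rabs (x - b)) / 2.

Lemma clamp_range (a b x : R) : a <= b -> a <= clamp a b x <= b.
Proof. intros H; unfold clamp, Rabs; repeat destruct Rcase_abs; lra. Qed.

Lemma clamp_id (a b x : R) : a <= x <= b -> clamp a b x = x.
Proof. intros H; unfold clamp, Rabs; repeat destruct Rcase_abs; lra. Qed.

Lemma continuous_clamp (a b x : R) : continuous (clamp a b) x.
Proof.
unfold clamp, Rdiv; apply continuous_Rmult; [|auto with cont].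
apply continuous_Rminus; [apply continuous_Rplus; [auto with cont|]|];
  apply continuous_Rabs_comp; auto with cont.
Qed.

Lemma continuous_comp_clamp (f : R -> R) (a b : R) : a <= b ->
  (forall x, a <= x <= b ->
     filterlim f (within (fun y => a <= y <= b) (locally x)) (locally (f x))) ->
  forall x, continuous (fun y => f (clamp a b y)) x.
Proof.
intros Hab Hf x P HP.
assert (H := continuous_clamp a b x _ (Hf _ (clamp_range a b x Hab) P HP)).
unfold filtermap, within in H |- *; revert H.
apply filter_imp; intros y Hy; apply Hy, clamp_range, Hab.
Qed.

Lemma RInt_sqr_div_ge0 (h : R -> R) (ell : R) : 0 < ell ->
  (forall x, 0 <= x <= ell ->
     filterlim h (within (fun y => 0 <= y <= ell) (locally x)) (locally (h x))) ->
  (forall x, 0 <= x <= ell -> 0 < h x) ->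
  0 <= RInt (fun x => x ^ 2 / h x) 0 ell.
Proof.
intros Hl Hc Hp.
(* [RInt] is meaningless for non-integrable functions; [h] extended by
   [clamp] is continuous on all of [R], hence integrable. *)
set (g := fun x => x ^ 2 / h (clamp 0 ell x)).
assert (Hg : ex_RInt g 0 ell).
{ apply (@ex_RInt_continuous R_CompleteNormedModule); intros z _; unfold g, Rdiv.
  apply continuous_Rmult; [simpl; auto with cont|].
  apply continuous_Rinv_comp; [apply continuous_comp_clamp; [lra|exact Hc]|].
  generalize (Hp _ (clamp_range 0 ell z ltac:(lra))); lra. }
rewrite (RInt_ext _ g).
- apply RInt_ge_0; [lra|exact Hg|].
  intros x Hx; unfold g; rewrite clamp_id by lra.
  apply Rmult_le_pos; [apply pow2_ge_0|apply Rlt_le, Rinv_0_lt_compat, Hp; lra].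
- intros x Hx; rewrite Rmin_left, Rmax_right in Hx by lra.
  unfold g; rewrite clamp_id by lra; reflexivity.
Qed.

Lemma tau_mu2_gt (ell kappa tau_buoy : R) (h_eq : R -> R) :
  0 < ell -> 0 < tau_buoy ->
  (forall x, 0 <= x <= ell ->
     filterlim h_eq (within (fun y => 0 <= y <= ell) (locally x)) (locally (h_eq x))) ->
  (forall x, 0 <= x <= ell -> 0 < h_eq x < 1) ->
  kappa ^ 2 < tau_mu2 ell kappa tau_buoy h_eq.
Proof.
intros Hl Ht Hc Hh; unfold tau_mu2.
assert (I : 0 <= / ell * RInt (fun x => x ^ 2 / h_eq x) 0 ell).
{ apply Rmult_le_pos; [apply Rlt_le, Rinv_0_lt_compat, Hl|].
  apply RInt_sqr_div_ge0; [exact Hl|exact Hc|intros x Hx; apply Hh, Hx]. }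
destruct (Hh ell ltac:(lra)) as [H0 H1].
assert (kappa ^ 2 <= kappa ^ 2 / h_eq ell).
{ unfold Rdiv; rewrite <- (Rmult_1_r (kappa ^ 2)) at 1.
  apply Rmult_le_compat_l; [apply pow2_ge_0|].
  rewrite <- Rinv_1; apply Rlt_le, Rinv_lt_contravar; lra. }
assert (0 < tau_buoy ^ 2) by (apply pow_lt, Ht).
lra.
Qed.

(** * Branch points *)

(** A continuous [k] with [k^2 = phi^2] equals [phi] or [-phi] at each point,
    hence [Re (k * conj phi)] never vanishes and, by the intermediate value
    theorem, cannot change sign. *)
Lemma continuous_root_no_sign_flip (k phi : R -> C) (a b : R) :
  (forall t, continuous k t) -> (forall t, continuous phi t) ->
  (forall t, phi t <> 0%C) -> (forall t, (k t * k t = phi t * phi t)%C) ->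
  k b = k a -> phi b = (- phi a)%C -> False.
Proof.
intros Hk Hphi Hnz Hsq Ekb Ephib.
set (f := fun t => Re (k t * Cconj (phi t))).
assert (Hf : forall t, f t <> 0).
{ intros t; unfold f.
  assert (Hpm : k t = phi t \/ k t = (- phi t)%C).
  { assert (E : ((k t - phi t) * (k t + phi t) = 0)%C)
      by (replace ((k t - phi t) * (k t + phi t))%C with (k t * k t - phi t * phi t)%C
            by ring; rewrite Hsq; ring).
    apply Cmult_integral in E; destruct E as [E|E]; [left|right];
      apply Ceq_minus; rewrite <- E; ring. }
  assert (P : 0 < Re (phi t) * Re (phi t) + Im (phi t) * Im (phi t))
    by (rewrite <- Cmod_sqr; generalize (proj1 (Cmod_gt_0 _) (Hnz t)); nra).
  destruct Hpm as [E|E]; rewrite E, Re_Cmult_conj; destruct (phi t); simpl in *; lra. }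
assert (Hfb : f b = - f a)
  by (unfold f; rewrite Ekb, Ephib, !Re_Cmult_conj; destruct (phi a); simpl; ring).
destruct (IVT_gen_consistent f a b 0) as [t [_ Ht]].
- intros t; unfold f; apply continuous_Re, continuous_Cmult;
    [apply Hk|apply continuous_Cconj, Hphi].
- rewrite Hfb; unfold Rmin, Rmax; destruct Rle_dec; generalize (Hf a); lra.
- exact (Hf t Ht).
Qed.

Definition half_turn (t : R) : C := (cos (t / 2), sin (t / 2)).

Lemma half_turn_sqr (t : R) : (half_turn t * half_turn t)%C = (cos t, sin t).
Proof.
unfold half_turn, Cmult; simpl.
replace (cos t) with (cos (2 * (t / 2))) by (f_equal; field).
replace (sin t) with (sin (2 * (t / 2))) by (f_equal; field).
rewrite cos_2a, sin_2a; f_equal; ring.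
Qed.

Lemma half_turn_2PI : half_turn (2 * PI) = (- half_turn 0)%C.
Proof.
unfold half_turn; replace (2 * PI / 2) with PI by field; replace (0 / 2) with 0 by field.
rewrite cos_PI, sin_PI, cos_0, sin_0; unfold Copp; simpl; f_equal; ring.
Qed.

Lemma continuous_half_turn (t : R) : continuous half_turn t.
Proof. unfold half_turn, Rdiv; auto 6 with cont. Qed.

Lemma radicand_around_upper (kappa rho : R) (u : C) : kappa <> 0 ->
  radicand kappa (Cplus (0, / kappa) (rho * u)) =
  Cmult (rho * u) (Cplus (kappa ^ 2 * rho * u) (0, 2 * kappa)).
Proof.
intros Hk; destruct u; unfold radicand, RtoC, Cmult, Cplus; simpl.
apply injective_projections; simpl; field; exact Hk.
Qed.

(** Along a small circle around [i/kappa], [1 + kappa^2 z^2] has the root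
    [sqrt rho e^(it/2) sqrt(kappa^2 rho e^(it) + 2 i kappa)], whose second
    factor stays in the upper half-plane; after one turn it has changed sign. *)
Lemma sqrt_branch_point_upper (kappa : R) : 0 < kappa -> sqrt_branch_point kappa (0, / kappa).
Proof.
intros Hk r Hr [g Hg].
assert (Hik : 0 < / kappa) by (apply Rinv_0_lt_compat, Hk).
set (rho := Rmin (r / 2) (/ kappa)).
assert (Hrho : 0 < rho < r) by (unfold rho, Rmin; destruct Rle_dec; lra).
assert (Hkrho : kappa * rho <= 1).
{ generalize (Rmin_r (r / 2) (/ kappa)); fold rho; intros H.
  apply (Rmult_le_compat_l kappa) in H; [rewrite Rinv_r in H|]; lra. }
set (z := fun t => Cplus (0, / kappa) (rho * (cos t, sin t))).
set (w := fun t => Cplus (kappa ^ 2 * rho * (cos t, sin t)) (0, 2 * kappa)).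
set (phi := fun t => (sqrt rho * half_turn t * sqrt_up (w t))%C).
assert (Hz : forall t, 0 < Cmod (z t - (0, / kappa)) < r).
{ intros t; unfold z.
  replace (Cminus (Cplus (0, / kappa) (rho * (cos t, sin t))) (0, / kappa))
    with (rho * (cos t, sin t))%C by ring.
  rewrite Cmod_mult, Cmod_cos_sin, Cmod_R, Rabs_pos_eq; lra. }
assert (Hw : forall t, 0 < Im (w t)).
{ intros t; unfold w; simpl.
  generalize (SIN_bound t); intros.
  assert (0 <= kappa * (kappa * rho) * (1 + sin t))
    by (apply Rmult_le_pos; [apply Rmult_le_pos|]; nra).
  nra. }
apply (continuous_root_no_sign_flip (fun t => g (z t)) phi 0 (2 * PI)).
- intros t; apply continuous_comp; [unfold z; auto 6 with cont|apply Hg, Hz].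
- intros t; unfold phi; apply continuous_Cmult;
    [apply continuous_Cmult; [auto with cont|apply continuous_half_turn]|].
  apply continuous_comp; [unfold w; auto 6 with cont|apply continuous_sqrt_up].
- intros t; unfold phi; apply Cmult_neq_0; [apply Cmult_neq_0|].
  + intros E; apply (f_equal Re) in E; simpl in E; generalize (sqrt_lt_R0 rho ltac:(lra)); lra.
  + intros E; apply (f_equal Cmod) in E; unfold half_turn in E.
    rewrite Cmod_cos_sin, Cmod_0 in E; lra.
  + intros E; apply (f_equal Re) in E; simpl in E.
    generalize (Re_sqrt_up_pos (w t) (slit_plane_intro _ (or_introl (Rgt_not_eq _ _ (Hw t))))).
    simpl; lra.
- intros t; rewrite (proj2 (Hg _ (Hz t))); unfold z; rewrite radicand_around_upper by lra.
  unfold phi.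
  transitivity ((RtoC (sqrt rho) * RtoC (sqrt rho)) * (half_turn t * half_turn t)
                * (sqrt_up (w t) * sqrt_up (w t)))%C; [|ring].
  rewrite <- RtoC_mult, sqrt_sqrt, half_turn_sqr, sqrt_up_root by (try apply Rlt_le, Hw; lra).
  unfold w; ring.
- unfold z; rewrite cos_2PI, sin_2PI, cos_0, sin_0; reflexivity.
- unfold phi, w; rewrite half_turn_2PI, cos_2PI, sin_2PI, cos_0, sin_0; ring.
Qed.

Lemma sqrt_branch_point_lower (kappa : R) :
  0 < kappa -> sqrt_branch_point kappa (0, - / kappa).
Proof.
intros Hk r Hr [g Hg]; apply (sqrt_branch_point_upper kappa Hk r Hr).
exists (fun z => g (- z)%C); intros z Hz.
assert (E : Cminus (- z) (0, - / kappa) = Copp (Cminus z (0, / kappa)))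
  by (destruct z; unfold Cminus, Copp, Cplus; simpl; f_equal; ring).
destruct (Hg (- z)%C) as [C1 C2]; [rewrite E, Cmod_opp; exact Hz|split].
- apply continuous_comp; [auto with cont|exact C1].
- rewrite C2; unfold radicand; ring.
Qed.

Lemma radicand_local_root (kappa : R) (s0 : C) : radicand kappa s0 <> 0%C ->
  exists r, 0 < r /\ exists g : C -> C, forall z, Cmod (z - s0) < r ->
    cdiff g z /\ (g z * g z = radicand kappa z)%C.
Proof.
intros Hs0; set (q0 := radicand kappa s0); destruct (Csqr_surj q0) as [c Hc].
set (h := fun z => (radicand kappa z * / q0)%C).
assert (Hh : forall z, cdiff h z)
  by (intros z; apply cdiff_mult; [apply cdiff_radicand|apply cdiff_const]).
assert (Hh0 : h s0 = 1%C) by (unfold h; fold q0; field; exact Hs0).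
assert (L : locally s0 (fun z => 0 < Re (h z))).
{ apply locally_pos; [apply continuous_Re, cdiff_continuous, Hh|rewrite Hh0; simpl; lra]. }
destruct (locally_Cmod_inv _ _ L) as [r [Hr Hr']].
exists r; split; [exact Hr|exists (fun z => (c * csqrt (h z))%C)]; intros z Hz.
assert (Hsl : slit_plane (h z)) by (apply slit_plane_intro; right; apply Hr', Hz).
split.
- apply cdiff_mult; [apply cdiff_const|apply cdiff_csqrt_comp; [apply Hh|exact Hsl]].
- transitivity ((c * c) * (csqrt (h z) * csqrt (h z)))%C; [ring|].
  rewrite Hc, (proj1 (csqrt_spec _ Hsl)); unfold h; fold q0; field; exact Hs0.
Qed.

Lemma sqrt_branch_point_iff (kappa : R) (s0 : C) : 0 < kappa ->
  sqrt_branch_point kappa s0 <-> s0 = (0, / kappa) \/ s0 = (0, - / kappa).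
Proof.
intros Hk; split.
- intros Hb; destruct (Ceq_dec (radicand kappa s0) 0) as [E|E]; [now apply radicand_eq0|].
  exfalso; destruct (radicand_local_root kappa s0 E) as [r [Hr [g Hg]]].
  apply (Hb r Hr); exists g; intros z Hz; destruct (Hg z (proj2 Hz)) as [Hd Hsq].
  split; [apply cdiff_continuous, Hd|exact Hsq].
- intros [E|E]; subst s0;
    [apply sqrt_branch_point_upper|apply sqrt_branch_point_lower]; exact Hk.
Qed.

Lemma sqrt_regular_point_of_neq (kappa : R) (s0 : C) : 0 < kappa ->
  s0 <> (0, / kappa) -> s0 <> (0, - / kappa) -> sqrt_regular_point kappa s0.
Proof.
intros Hk N1 N2.
destruct (radicand_local_root kappa s0) as [r [Hr [g Hg]]].
- intros E; destruct (radicand_eq0 kappa s0 Hk E); contradiction.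
- exists r; split; [exact Hr|exists g]; intros z Hz; destruct (Hg z Hz) as [Hd Hsq].
  split; [apply cdiff_ex_derive, Hd|exact Hsq].
Qed.

Theorem lemma4p22 (ell kappa tau_buoy : R) (h_eq : R -> R) :
  0 < ell -> 0 < kappa -> 0 < tau_buoy ->
  (forall x, 0 <= x <= ell ->
     filterlim h_eq (within (fun y => 0 <= y <= ell) (locally x))
       (locally (h_eq x))) ->
  (forall x, 0 <= x <= ell -> 0 < h_eq x < 1) ->
  let t2 := tau_mu2 ell kappa tau_buoy h_eq in
  (* holomorphic on the open right half-plane *)
  (forall s : C, 0 < Re s ->
     Pden ell kappa t2 s <> RtoC 0 /\ ex_derive (Hhat ell kappa t2) s) /\
  (* the only branching points are +- i/kappa *)
  (forall s0 : C,
     (sqrt_branch_point kappa s0 <-> (s0 = (0, / kappa) \/ s0 = (0, - / kappa))) /\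
     (s0 <> (0, / kappa) -> s0 <> (0, - / kappa) -> sqrt_regular_point kappa s0)) /\
  (* zeros of P off the cuts have negative real part *)
  (forall s : C, ~ on_cuts kappa s -> Pden ell kappa t2 s = RtoC 0 -> Re s < 0) /\
  (* the extension of P by continuity to the imaginary axis has no zeros *)
  (forall y : R, exists L : C, L <> RtoC 0 /\
     filterlim (Pden ell kappa t2)
       (within (fun z : C => 0 < Re z) (locally ((0, y) : C))) (locally L)).
Proof.
intros Hl Hk Hb Hc Hh t2.
assert (Ht : kappa ^ 2 < t2) by (apply tau_mu2_gt; assumption).
assert (Ht0 : 0 <= t2) by (generalize (pow2_ge_0 kappa); lra).
split; [|split; [|split]].
- intros s Hs; split; [apply Pden_neq0_rhp|apply Hhat_ex_derive]; assumption.
- intros s0; split; [apply sqrt_branch_point_iff|apply sqrt_regular_point_of_neq]; assumption.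
- intros s; apply Pden_eq0_Re_neg; assumption.
- intros y; apply Pden_axis_limit; assumption.
Qed.
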